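(* Let $\Omega_{AB}$ be a joint state space with $\Omega_A\otimes_{\min}\Omega_B\subseteq\Omega_{AB}\subseteq\Omega_A\otimes_{\max}\Omega_B$. Consider a dense coding protocol with initial state $\phi\in\Omega_{AB}$, message distribution $p_x$ and allowed local transformations $T_x$ on $A$, in which Bob's decoding measurement has effects of the form $$E_{y_1,y_2}=\sum_z q_z\, e^{(z)}_{y_1}\otimes f^{(z)}_{y_2},$$ where $\{q_z\}$ is a probability distribution and, for each $z$, $\{e^{(z)}_{y_1}\}_{y_1}\subset\mathcal E_A$ with $\sum_{y_1}e^{(z)}_{y_1}=u_A$ and $\{f^{(z)}_{y_2}\}_{y_2}\subset\mathcal E_B$ with $\sum_{y_2}f^{(z)}_{y_2}=u_B$. Then the mutual information between the message $X$ and the outcome pair $(Y_1,Y_2)$ satisfies $I(X:Y_1Y_2)\le\chi_C(\Omega_A)$. In particular no such protocol achieves superdense coding.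
   Context: Single systems: $\Omega_A\subset\mathbb R^{n_A+1}$, $\Omega_B\subset\mathbb R^{n_B+1}$ are GPT state spaces of the form $\{(1,r)^{\mathrm t}: r\in\mathcal R\}$ with $\mathcal R$ compact convex, unit effects $u_A,u_B=(1,\mathbf 0)^{\mathrm t}$, effect sets $\mathcal E_A=\{e:0\le e\cdot\omega\le1\ \forall\omega\in\Omega_A\}$ (similarly $\mathcal E_B$). Bipartite states are real $(n_A+1)\times(n_B+1)$ matrices, identified with $\mathbb R^{n_A+1}\otimes\mathbb R^{n_B+1}$ via $v\otimes w=vw^{\mathrm t}$, inner product $X\cdot Y=\mathrm{Tr}(X^{\mathrm t}Y)$. $\Omega_A\otimes_{\min}\Omega_B$ is the convex hull of product states $\omega_A\otimes\omega_B$; $\Omega_A\otimes_{\max}\Omega_B=\{\phi:(u_A\otimes u_B)\cdot\phi=1,\ (e\otimes f)\cdot\phi\ge0\ \forall e\in\mathcal E_A,f\in\mathcal E_B\}$. $\Omega_{AB}$ is closed and convex; $\mathcal E_{AB}=\{E:0\le E\cdot\phi\le1\ \forall\phi\in\Omega_{AB}\}$. An allowed local transformation on $A$ is a linear map $T$ with $T\Omega_A\subseteq\Omega_A$ and $T\phi\in\Omega_{AB}$ for all $\phi\in\Omega_{AB}$. In the dense coding protocol, outcome probabilities are $p(y_1,y_2|x)=E_{y_1,y_2}\cdot(T_x\phi)$. Classical capacity $\chi_C(\Omega_A)$: supremum of $I(X:Y)$ over finite message distributions, states $\omega_x\in\Omega_A$ and measurements $\{e_y\}\subset\mathcal E_A$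 ($\sum_y e_y=u_A$) with $p(y|x)=e_y\cdot\omega_x$. Superdense coding means $I(X:Y)>\chi_C(\Omega_A)$. *)

From Stdlib Require Import Reals.
From mathcomp Require Import all_boot.
Set Implicit Arguments. Unset Strict Implicit. Unset Printing Implicit Defensive.
Local Open Scope R_scope.

(* vectors of R^{n+1}; index ord0 is the "1" coordinate *)
Definition vec (n : nat) := 'I_n.+1 -> R.
(* bipartite states: real (nA+1) x (nB+1) matrices *)
Definition mat (nA nB : nat) := 'I_nA.+1 -> 'I_nB.+1 -> R.
Definition lmap (n : nat) := 'I_n.+1 -> 'I_n.+1 -> R.

Definition dotv (n : nat) (u v : vec n) : R :=
  \big[Rplus/0]_(i < n.+1) (u i * v i).

Definition dotm (nA nB : nat) (X Y : mat nA nB) : R :=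
  \big[Rplus/0]_(i < nA.+1) \big[Rplus/0]_(j < nB.+1) (X i j * Y i j).

Definition tens (nA nB : nat) (v : vec nA) (w : vec nB) : mat nA nB :=
  fun i j => v i * w j.

Definition unitv (n : nat) : vec n := fun i => if i == ord0 then 1 else 0.
Arguments unitv n i : clear implicits.

Definition seq_closed (I : Type) (S : (I -> R) -> Prop) : Prop :=
  forall (s : nat -> I -> R) (l : I -> R),
    (forall k, S (s k)) -> (forall i, Un_cv (fun k => s k i) (l i)) -> S l.

Definition bounded_set (I : Type) (S : (I -> R) -> Prop) : Prop :=
  exists M : R, forall v, S v -> forall i, Rabs (v i) <= M.

(* compact subset of R^I (I finite): closed and bounded (Heine-Borel) *)
Definition compact_set (I : Type) (S : (I -> R) -> Prop) : Prop :=
  seq_closed S /\ bounded_set S.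

Definition convex_set (I : Type) (S : (I -> R) -> Prop) : Prop :=
  forall u v t, S u -> S v -> 0 <= t <= 1 -> S (fun i => t * u i + (1 - t) * v i).

Definition closed_mat (nA nB : nat) (S : mat nA nB -> Prop) : Prop :=
  forall (s : nat -> mat nA nB) (l : mat nA nB),
    (forall k, S (s k)) -> (forall i j, Un_cv (fun k => s k i j) (l i j)) -> S l.

Definition convex_mat (nA nB : nat) (S : mat nA nB -> Prop) : Prop :=
  forall u v t, S u -> S v -> 0 <= t <= 1 ->
    S (fun i j => t * u i j + (1 - t) * v i j).

Definition state_space (n : nat) (Om : vec n -> Prop) : Prop :=
  exists Rset : ('I_n -> R) -> Prop,
    compact_set Rset /\ convex_set Rset /\ (exists r, Rset r) /\
    forall w : vec n, Om w <-> (w ord0 = 1 /\ Rset (fun i => w (lift ord0 i))).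

Definition effect (n : nat) (Om : vec n -> Prop) (e : vec n) : Prop :=
  forall w, Om w -> 0 <= dotv e w <= 1.

Definition measurement (n : nat) (Om : vec n -> Prop) (Y : finType) (e : Y -> vec n) : Prop :=
  (forall y, effect Om (e y)) /\
  (forall i, \big[Rplus/0]_(y : Y) e y i = unitv n i).

Definition min_tensor (nA nB : nat) (OmA : vec nA -> Prop) (OmB : vec nB -> Prop)
  (phi : mat nA nB) : Prop :=
  exists (K : nat) (lam : 'I_K -> R) (a : 'I_K -> vec nA) (b : 'I_K -> vec nB),
    (forall k, 0 <= lam k) /\ \big[Rplus/0]_(k < K) lam k = 1 /\
    (forall k, OmA (a k)) /\ (forall k, OmB (b k)) /\
    forall i j, phi i j = \big[Rplus/0]_(k < K) (lam k * tens (a k) (b k) i j).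

Definition max_tensor (nA nB : nat) (OmA : vec nA -> Prop) (OmB : vec nB -> Prop)
  (phi : mat nA nB) : Prop :=
  dotm (tens (unitv nA) (unitv nB)) phi = 1 /\
  forall e f, effect OmA e -> effect OmB f -> 0 <= dotm (tens e f) phi.

(* action of T on A and of T (x) id on AB *)
Definition applyv (n : nat) (T : lmap n) (v : vec n) : vec n :=
  fun i => \big[Rplus/0]_(k < n.+1) (T i k * v k).
Definition applyA (nA nB : nat) (T : lmap nA) (phi : mat nA nB) : mat nA nB :=
  fun i j => \big[Rplus/0]_(k < nA.+1) (T i k * phi k j).

Definition allowed_local (nA nB : nat) (OmA : vec nA -> Prop) (OmAB : mat nA nB -> Prop)
  (T : lmap nA) : Prop :=
  (forall w, OmA w -> OmA (applyv T w)) /\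
  (forall phi, OmAB phi -> OmAB (applyA T phi)).

Definition prob_dist (X : finType) (p : X -> R) : Prop :=
  (forall x, 0 <= p x) /\ \big[Rplus/0]_(x : X) p x = 1.

Definition log2 (x : R) : R := ln x / ln 2.

(* I(X:Y) for input distribution p and channel W(y|x); 0 log 0 = 0 *)
Definition mutual_info (X Y : finType) (p : X -> R) (W : X -> Y -> R) : R :=
  \big[Rplus/0]_(x : X) \big[Rplus/0]_(y : Y)
    (let pxy := p x * W x y in
     let py := \big[Rplus/0]_(x' : X) (p x' * W x' y) in
     if Req_EM_T pxy 0 then 0 else pxy * log2 (pxy / (p x * py))).

(* the set of mutual informations achievable by classical encodings in Om;
   chi_C(Om) is its supremum *)
Definition classical_rates (n : nat) (Om : vec n -> Prop) (r : R) : Prop :=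
  exists (K L : nat) (p : 'I_K -> R) (om : 'I_K -> vec n) (e : 'I_L -> vec n),
    prob_dist p /\ (forall x, Om (om x)) /\ measurement Om e /\
    r = mutual_info p (fun x y => dotv (e y) (om x)).

Definition decoding (nA nB : nat) (Z Y1 Y2 : finType) (q : Z -> R)
  (e : Z -> Y1 -> vec nA) (f : Z -> Y2 -> vec nB) (y1 : Y1) (y2 : Y2) : mat nA nB :=
  fun i j => \big[Rplus/0]_(z : Z) (q z * tens (e z y1) (f z y2) i j).

From Stdlib Require Import Reals Lra Psatz ClassicalEpsilon FunctionalExtensionality.
From mathcomp Require Import all_boot.
From HB Require Import structures.
Set Implicit Arguments.
Unset Strict Implicit.
Unset Printing Implicit Defensive.
Local Open Scope R_scope.

HB.instance Definition _ := Monoid.isComLaw.Build R 0 Rplus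
  (fun x y z => esym (Rplus_assoc x y z)) Rplus_comm Rplus_0_l.
HB.instance Definition _ := Monoid.isMulLaw.Build R 0 Rmult Rmult_0_l Rmult_0_r.
HB.instance Definition _ := Monoid.isAddLaw.Build R Rmult Rplus
  Rmult_plus_distr_r Rmult_plus_distr_l.

(* Since phi lies in the maximal tensor product, every outcome y2 of Bob's
   effect f^(z) steers Alice's system into a subnormalised state lam * w with
   w in Omega_A: a vector that is nonnegative on all effects lies in the cone
   over Omega_A, by a separating-hyperplane argument for the compact convex set
   Omega_A.  Hence the channel x |-> (y1, y2) is a mixture, with weights
   q_z * lam_(z,y2) independent of x, of classical encodings x |-> T_x w_(z,y2)
   read out by the measurement e^(z), where the label y2 is revealed.  By the
   log-sum inequality the mutual information of such a channel is at most the
   average of the mutual informations of its components, each of which is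
   bounded by chi_C(Omega_A). *)

Lemma Rsum_le (I : finType) (F G : I -> R) :
  (forall i, F i <= G i) -> \big[Rplus/0]_(i : I) F i <= \big[Rplus/0]_(i : I) G i.
Proof. by move=> FG; apply: (big_ind2 Rle) => // *; lra. Qed.

Lemma Rsum_ge0 (I : finType) (P : pred I) (F : I -> R) :
  (forall i, 0 <= F i) -> 0 <= \big[Rplus/0]_(i | P i) F i.
Proof. by move=> F0; apply: (big_ind (Rle 0)) => // *; lra. Qed.

Lemma Rsum_ge_term (I : finType) (F : I -> R) (j : I) :
  (forall i, 0 <= F i) -> F j <= \big[Rplus/0]_(i : I) F i.
Proof.
move=> F0; rewrite (bigD1 j) //= -{1}[F j]Rplus_0_r.
by apply: Rplus_le_compat_l; apply: Rsum_ge0.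
Qed.

Lemma Rabs_le_bounds (x M : R) : Rabs x <= M -> - M <= x <= M.
Proof. by move=> xM; have := Rle_abs x; have := Rle_abs (- x); rewrite Rabs_Ropp; lra. Qed.

Lemma Rabs_sum_le (I : finType) (F G : I -> R) :
  (forall i, Rabs (F i) <= G i) -> Rabs (\big[Rplus/0]_(i : I) F i) <= \big[Rplus/0]_(i : I) G i.
Proof.
move=> FG; apply: (big_ind2 (fun x y => Rabs x <= y)) => //.
  by rewrite Rabs_R0; lra.
by move=> x1 y1 x2 y2 h1 h2; have := Rabs_triang x1 x2; lra.
Qed.

Definition dotr n (a s : 'I_n -> R) : R := \big[Rplus/0]_(i < n) (a i * s i).

Definition sqdist n (s r : 'I_n -> R) : R := \big[Rplus/0]_(i < n) (s i - r i) ^ 2.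

Lemma dotr_scalel n (k : R) (a s : 'I_n -> R) :
  dotr (fun i => k * a i) s = k * dotr a s.
Proof. by rewrite /dotr big_distrr; apply: eq_bigr => i _ /=; ring. Qed.

Lemma dotr_translate n (a s s' : 'I_n -> R) :
  dotr a s = dotr a s' + dotr a (fun i => s i - s' i).
Proof. by rewrite /dotr -big_split; apply: eq_bigr => i _ /=; ring. Qed.

Lemma dotr_bound n (a s : 'I_n -> R) (M : R) :
  (forall i, Rabs (s i) <= M) -> Rabs (dotr a s) <= \big[Rplus/0]_(i < n) (Rabs (a i) * M).
Proof.
move=> sM; apply: Rabs_sum_le => i; rewrite Rabs_mult.
by apply: Rmult_le_compat_l; [apply: Rabs_pos | apply: sM].
Qed.

Lemma sqdist_ge0 n (s r : 'I_n -> R) : 0 <= sqdist s r.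
Proof. by apply: Rsum_ge0 => i; apply: pow2_ge_0. Qed.

Lemma sqdist_ge_coord n (s r : 'I_n -> R) (i : 'I_n) : (s i - r i) ^ 2 <= sqdist s r.
Proof. by apply: Rsum_ge_term => j; apply: pow2_ge_0. Qed.

Lemma sqdist_convex_comb n (s s' r : 'I_n -> R) (t : R) :
  sqdist (fun i => t * s i + (1 - t) * s' i) r =
  sqdist s' r + (-2 * t) * dotr (fun i => r i - s' i) (fun i => s i - s' i)
  + t ^ 2 * sqdist s s'.
Proof. by rewrite /sqdist /dotr !big_distrr -!big_split; apply: eq_bigr => i _ /=; ring. Qed.

Section Separation.
Variables (n : nat) (K : ('I_n -> R) -> Prop) (r : 'I_n -> R).

Lemma sqdist_inf : (exists s, K s) ->
  exists d, 0 <= d /\ (forall s, K s -> d <= sqdist s r) /\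
    (forall eps, 0 < eps -> exists s, K s /\ sqdist s r < d + eps).
Proof.
move=> [s0 Ks0].
pose E x := exists s, K s /\ x = - sqdist s r.
have [m [m_ub m_least]] : {m | is_lub E m}.
  apply: completeness; last by exists (- sqdist s0 r), s0.
  by exists 0 => _ [s [_ ->]]; have := sqdist_ge0 s r; lra.
exists (- m); split; [|split].
- have : m <= 0 by apply: m_least => _ [s [_ ->]]; have := sqdist_ge0 s r; lra.
  lra.
- by move=> s Ks; have := m_ub _ (ex_intro _ s (conj Ks erefl)); lra.
- move=> eps eps0; apply: NNPP => far.
  have : m <= m - eps; last lra.
  apply: m_least => _ [s [Ks ->]].
  have : ~ sqdist s r < - m + eps by move=> h; apply: far; exists s.
  lra.
Qed.

Lemma seq_closed_sqdist_approx : seq_closed K ->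
  (forall eps, 0 < eps -> exists s, K s /\ sqdist s r < eps) -> K r.
Proof.
move=> Kcl approx.
have [s Hs] : exists s : nat -> 'I_n -> R, forall k, K (s k) /\ sqdist (s k) r < / INR k.+1.
  apply: (choice (fun k s => K s /\ sqdist s r < / INR k.+1)) => k.
  by apply: approx; apply: Rinv_0_lt_compat; apply: lt_0_INR; lia.
apply: (Kcl s) => [k|i eps eps0]; first by case: (Hs k).
have [N [HN N0]] := archimed_cor1 (eps * eps) ltac:(nra).
exists N => k kN; rewrite /R_dist.
have small : / INR k.+1 <= / INR N.
  by apply: Rinv_le_contravar; [apply: lt_0_INR | apply: le_INR]; lia.
have := sqdist_ge_coord (s k) r i; case: (Hs k) => _ close coord.
by apply: Rabs_def1; nra.
Qed.

Lemma bounded_sqdist : bounded_set K ->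
  exists D, 0 <= D /\ forall s s', K s -> K s' -> sqdist s s' <= D.
Proof.
move=> [M KM]; exists (\big[Rplus/0]_(i < n) (2 * M) ^ 2).
split=> [|s s' Ks Ks']; first by apply: Rsum_ge0 => i; apply: pow2_ge_0.
apply: Rsum_le => i.
by have /Rabs_le_bounds h := KM s Ks i; have /Rabs_le_bounds h' := KM s' Ks' i; nra.
Qed.

Lemma near_minimizer_separates (d : R) : convex_set K -> bounded_set K -> 0 < d ->
  (forall s, K s -> d <= sqdist s r) ->
  (forall eps, 0 < eps -> exists s, K s /\ sqdist s r < d + eps) ->
  exists s', K s' /\ d <= sqdist s' r /\
    forall s, K s -> dotr (fun i => r i - s' i) (fun i => s i - s' i) < d / 2.
Proof.
move=> Kcv Kbd d0 d_lb d_inf.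
have [D [D0 KD]] := bounded_sqdist Kbd.
(* Moving from s' towards s by t cannot get closer to r than d; t and the slack
   t * d / 2 allowed for s' are tuned so that this bounds the inner product by d / 2. *)
pose t := d / (2 * (D + d)).
have tdef : t * (2 * (D + d)) = d by rewrite /t; field; lra.
have t0 : 0 < t by apply: Rdiv_lt_0_compat; lra.
have [s' [Ks' near]] := d_inf (t * d / 2) ltac:(nra).
exists s'; split; [|split] => // [|s Ks]; first exact: d_lb.
have Kst : K (fun i => t * s i + (1 - t) * s' i) by apply: Kcv => //; nra.
have := d_lb _ Kst; rewrite sqdist_convex_comb.
have := KD s s' Ks Ks'.
set S := dotr _ _; set Q := sqdist s s' => QD lb.
have tQ : t ^ 2 * Q <= t ^ 2 * D by apply: Rmult_le_compat_l => //; nra.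
have : 2 * t * S < t * d by nra.
by move=> tS; apply: (Rmult_lt_reg_l t) => //; lra.
Qed.

Lemma strict_separation : seq_closed K -> bounded_set K -> convex_set K ->
  (exists s, K s) -> ~ K r ->
  exists a beta, (forall s, K s -> dotr a s < beta) /\ beta < dotr a r.
Proof.
move=> Kcl Kbd Kcv Kne Kr.
have [d [d0 [d_lb d_inf]]] := sqdist_inf Kne.
have {}d0 : 0 < d.
  case: (Rle_lt_or_eq_dec _ _ d0) => // d_eq0; case: Kr.
  apply: seq_closed_sqdist_approx => // eps eps0.
  by rewrite -[eps]Rplus_0_l d_eq0; apply: d_inf.
have [s' [Ks' [far sep]]] := near_minimizer_separates Kcv Kbd d0 d_lb d_inf.
exists (fun i => r i - s' i), (dotr (fun i => r i - s' i) s' + d / 2); split.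
  by move=> s Ks; rewrite (dotr_translate _ s s'); have := sep s Ks; lra.
rewrite (dotr_translate _ r s').
have -> : dotr (fun i => r i - s' i) (fun i => r i - s' i) = sqdist s' r.
  by apply: eq_bigr => i _ /=; ring.
lra.
Qed.

End Separation.

Definition basisv n (j : 'I_n.+1) : vec n := fun k => if k == j then 1 else 0.

Definition tailv n (w : vec n) : 'I_n -> R := fun i => w (lift ord0 i).

Definition consv n (x : R) (t : 'I_n -> R) : vec n :=
  fun j => if unlift ord0 j is Some i then t i else x.

Lemma consv0 n (x : R) (t : 'I_n -> R) : consv x t ord0 = x.
Proof. by rewrite /consv unlift_none. Qed.

Lemma tailv_consv n (x : R) (t : 'I_n -> R) : tailv (consv x t) = t.
Proof. by apply: functional_extensionality => i; rewrite /tailv /consv liftK. Qed.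

Lemma dotv_basisv n (j : 'I_n.+1) (w : vec n) : dotv (basisv j) w = w j.
Proof. by rewrite /dotv (bigD1 j) //= /basisv eqxx big1 => [|k /negbTE ->] /=; ring. Qed.

Lemma dotv_unitv n (w : vec n) : dotv (unitv n) w = w ord0.
Proof. exact: dotv_basisv. Qed.

Lemma dotv_linl n (u u' w : vec n) (a b : R) :
  dotv (fun k => a * u k + b * u' k) w = a * dotv u w + b * dotv u' w.
Proof. by rewrite /dotv !big_distrr -big_split; apply: eq_bigr => k _ /=; ring. Qed.

Lemma dotv_scaler n (e w : vec n) (lam : R) :
  dotv e (fun i => lam * w i) = lam * dotv e w.
Proof. by rewrite /dotv big_distrr; apply: eq_bigr => k _ /=; ring. Qed.

Lemma dotv_cons n (u w : vec n) : dotv u w = u ord0 * w ord0 + dotr (tailv u) (tailv w).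
Proof. by rewrite /dotv big_ord_recl. Qed.

Section StateSpace.
Variables (n : nat) (Om : vec n -> Prop).
Hypothesis HOm : state_space Om.

Lemma state_ord0 (w : vec n) : Om w -> w ord0 = 1.
Proof. by case: HOm => K [_ [_ [_ HK]]] /HK []. Qed.

Lemma state_exists : exists w, Om w.
Proof.
case: HOm => K [_ [_ [[r Kr] HK]]]; exists (consv 1 r).
by apply/HK; rewrite consv0 -[fun i => _]/(tailv (consv 1 r)) tailv_consv.
Qed.

Lemma unitv_effect : effect Om (unitv n).
Proof. by move=> w Hw; rewrite dotv_unitv state_ord0 //; lra. Qed.

Lemma state_space_dual (w : vec n) : w ord0 = 1 ->
  (forall e, effect Om e -> 0 <= dotv e w) -> Om w.
Proof.
move=> w0 wpos; case: HOm => K [[Kcl Kbd] [Kcv [Kne HK]]].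
apply/HK; split=> //; apply: NNPP => Kw.
have [a [beta [Ka aw]]] := strict_separation Kcl Kbd Kcv Kne Kw.
have [M KM] := Kbd.
pose B := Rabs beta + \big[Rplus/0]_(i < n) (Rabs (a i) * M).
have gap s : K s -> 0 < beta - dotr a s <= B.
  move=> Ks; split; first by have := Ka s Ks; lra.
  have := dotr_bound a (KM s Ks); have := Rle_abs beta.
  by have := Rle_abs (- dotr a s); rewrite Rabs_Ropp; rewrite /B; lra.
have B0 : 0 <= B by case: Kne => s /gap; lra.
(* The separating functional, rescaled so that it takes values in [0, 1] on Om *)
pose c := / (B + 1).
have cB : c * (B + 1) = 1 by rewrite /c; field; lra.
have c0 : 0 < c by apply: Rinv_0_lt_compat; lra.
pose e := consv (c * beta) (fun i => - c * a i).
have dotv_e w' : dotv e w' = c * (beta * w' ord0 - dotr a (tailv w')).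
  by rewrite dotv_cons /e consv0 tailv_consv dotr_scalel; ring.
have : effect Om e.
  move=> w' /HK [w'0 Kw']; have := gap _ Kw'.
  by rewrite dotv_e w'0 /tailv => g; split; nra.
by move/wpos; rewrite dotv_e w0; rewrite /tailv; nra.
Qed.

Lemma coordinate_effect : exists c, 0 < c /\ forall (i : 'I_n) (s : R), Rabs s <= 1 ->
  effect Om (fun k => / 2 * unitv n k + s * c * basisv (lift ord0 i) k).
Proof.
case: HOm => K [[_ [M KM]] [_ [_ HK]]].
pose c := / (2 * (Rabs M + 1)).
have c0 : 0 < c by apply: Rinv_0_lt_compat; have := Rabs_pos M; lra.
have cM : c * (2 * (Rabs M + 1)) = 1 by rewrite /c; field; have := Rabs_pos M; lra.
exists c; split=> // i s s1 w /[dup] /HK [w0 Kw] Hw.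
rewrite dotv_linl dotv_unitv dotv_basisv w0.
have wM : Rabs (w (lift ord0 i)) <= Rabs M by apply: Rle_trans (KM _ Kw i) (Rle_abs M).
have /Rabs_le_bounds : Rabs (s * c * w (lift ord0 i)) <= 1 * c * Rabs M.
  rewrite !Rabs_mult (Rabs_pos_eq c); last lra.
  apply: Rmult_le_compat; [|apply: Rabs_pos|apply: Rmult_le_compat_r|] => //; try lra.
  by apply: Rmult_le_pos; [apply: Rabs_pos | lra].
by split; nra.
Qed.

Lemma effect_positive_cone (v : vec n) : (forall e, effect Om e -> 0 <= dotv e v) ->
  exists lam w, 0 <= lam /\ Om w /\ v = (fun i => lam * w i).
Proof.
move=> vpos; have v00 : 0 <= v ord0 by rewrite -dotv_unitv; apply/vpos/unitv_effect.
case: (Rle_lt_or_eq_dec _ _ v00) => [v0|v0].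
  exists (v ord0), (fun i => / v ord0 * v i); split; [lra|split].
    apply: state_space_dual => [|e He]; first by field; lra.
    by rewrite dotv_scaler; apply: Rmult_le_pos; [apply/Rlt_le/Rinv_0_lt_compat | apply: vpos].
  by apply: functional_extensionality => i; field; lra.
have [w Hw] := state_exists; exists 0, w; split; [lra|split] => //.
have [c [c0 Hc]] := coordinate_effect.
apply: functional_extensionality => j; rewrite Rmult_0_l.
case: (unliftP ord0 j) => [i ->|->]; last by rewrite -v0.
have := vpos _ (Hc i 1 ltac:(rewrite Rabs_R1; lra)).
have := vpos _ (Hc i (-1) ltac:(rewrite Rabs_Ropp Rabs_R1; lra)).
by rewrite !dotv_linl dotv_unitv dotv_basisv -v0 => h1 h2; nra.
Qed.

End StateSpace.

(* (id (x) f) Psi: Alice's unnormalised state after Bob's effect f. *)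
Definition contractB nA nB (Psi : mat nA nB) (f : vec nB) : vec nA :=
  fun i => \big[Rplus/0]_(j < nB.+1) (Psi i j * f j).

Lemma dotm_tens nA nB (e : vec nA) (f : vec nB) (Psi : mat nA nB) :
  dotm (tens e f) Psi = dotv e (contractB Psi f).
Proof.
rewrite /dotm /dotv; apply: eq_bigr => i _.
by rewrite /contractB big_distrr; apply: eq_bigr => j _ /=; rewrite /tens; ring.
Qed.

Lemma contractB_applyA nA nB (T : lmap nA) (Psi : mat nA nB) (f : vec nB) :
  contractB (applyA T Psi) f = applyv T (contractB Psi f).
Proof.
apply: functional_extensionality => i; rewrite /contractB /applyA /applyv.
under eq_bigr do rewrite big_distrl /=.
rewrite exchange_big; apply: eq_bigr => k _ /=.
by rewrite big_distrr; apply: eq_bigr => j _ /=; ring.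
Qed.

Lemma contractB_measurement nA nB (Y : finType) (Psi : mat nA nB) (f : Y -> vec nB) :
  (forall j, \big[Rplus/0]_(y : Y) f y j = unitv nB j) ->
  \big[Rplus/0]_(y : Y) contractB Psi (f y) ord0 = dotm (tens (unitv nA) (unitv nB)) Psi.
Proof.
move=> fu; rewrite dotm_tens dotv_unitv /contractB exchange_big /=.
by apply: eq_bigr => j _; rewrite -big_distrr /= fu.
Qed.

Lemma dotm_decoding nA nB (Z Y1 Y2 : finType) (q : Z -> R) (e : Z -> Y1 -> vec nA)
    (f : Z -> Y2 -> vec nB) (y1 : Y1) (y2 : Y2) (Psi : mat nA nB) :
  dotm (decoding q e f y1 y2) Psi =
  \big[Rplus/0]_(z : Z) (q z * dotm (tens (e z y1) (f z y2)) Psi).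
Proof.
rewrite /dotm /decoding.
under [RHS]eq_bigr do rewrite big_distrr /=.
rewrite [RHS]exchange_big /=; apply: eq_bigr => i _.
under [RHS]eq_bigr do rewrite big_distrr /=.
rewrite [RHS]exchange_big /=; apply: eq_bigr => j _.
by rewrite big_distrl; apply: eq_bigr => z _ /=; ring.
Qed.

Lemma applyv_scaler n (T : lmap n) (lam : R) (w : vec n) :
  applyv T (fun i => lam * w i) = (fun i => lam * applyv T w i).
Proof.
apply: functional_extensionality => i; rewrite /applyv big_distrr.
by apply: eq_bigr => k _ /=; ring.
Qed.

Lemma max_tensor_steering nA nB (OmA : vec nA -> Prop) (OmB : vec nB -> Prop)
    (I : Type) (phi : mat nA nB) (f : I -> vec nB) :
  state_space OmA -> max_tensor OmA OmB phi -> (forall k, effect OmB (f k)) ->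
  exists (lam : I -> R) (w : I -> vec nA), (forall k, 0 <= lam k) /\ (forall k, OmA (w k)) /\
    forall k, contractB phi (f k) = (fun i => lam k * w k i).
Proof.
move=> HA [_ phi_pos] Hf.
have /choice [lw Hlw] : forall k, exists lw : R * vec nA,
    0 <= lw.1 /\ OmA lw.2 /\ contractB phi (f k) = (fun i => lw.1 * lw.2 i).
  move=> k; have [lam [w Hlw]] :
      exists lam w, 0 <= lam /\ OmA w /\ contractB phi (f k) = (fun i => lam * w i).
    by apply: effect_positive_cone => // e He; rewrite -dotm_tens; apply: phi_pos.
  by exists (lam, w).
exists (fun k => (lw k).1), (fun k => (lw k).2).
by split; [|split] => k; case: (Hlw k) => [? [? ?]].
Qed.

Definition plogq (a b : R) : R := if Req_EM_T a 0 then 0 else a * log2 (a / b).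

Lemma mutual_infoE (X Y : finType) (p : X -> R) (W : X -> Y -> R) :
  mutual_info p W = \big[Rplus/0]_(x : X) \big[Rplus/0]_(y : Y)
     plogq (p x * W x y) (p x * \big[Rplus/0]_(x' : X) (p x' * W x' y)).
Proof. reflexivity. Qed.

Lemma plogq0 (b : R) : plogq 0 b = 0.
Proof. by rewrite /plogq; case: Req_EM_T. Qed.

Lemma plogqZ (mu a b : R) : 0 <= mu -> plogq (mu * a) (mu * b) = mu * plogq a b.
Proof.
move=> mu0; case: (Req_dec mu 0) => [->|mu_ne0]; first by rewrite !Rmult_0_l plogq0.
rewrite /plogq; case: Req_EM_T => [mua0|mua_ne0]; case: Req_EM_T => [a0|a_ne0].
- by rewrite Rmult_0_r.
- by case: (Rmult_integral _ _ mua0).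
- by case: mua_ne0; rewrite a0 Rmult_0_r.
- have -> : mu * a / (mu * b) = a / b.
    by rewrite /Rdiv Rinv_mult -(Rmult_1_l (a * / b)) -(Rinv_r mu) //; ring.
  by rewrite Rmult_assoc.
Qed.

Lemma ln_le_sub1 (x : R) : 0 < x -> ln x <= x - 1.
Proof. by move=> x0; have := exp_ineq1_le (ln x); rewrite exp_ln //; lra. Qed.

Lemma plogq_ge_tangent (a b lam : R) : 0 <= a -> 0 <= b -> (0 < a -> 0 < b) -> 0 < lam ->
  (a * ln lam + a - lam * b) / ln 2 <= plogq a b.
Proof.
move=> a0 b0 ab lam0; have l2 : 0 < ln 2 by have := ln_lt_2; lra.
apply: (Rmult_le_reg_r (ln 2)) => //.
rewrite /plogq /log2; case: Req_EM_T => [a_eq0|a_ne0] /=.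
  by rewrite a_eq0 /Rdiv Rmult_assoc Rinv_l; nra.
have a_pos : 0 < a by lra.
have b_pos := ab a_pos.
have y0 : 0 < lam * b / a by apply: Rdiv_lt_0_compat => //; nra.
(* ln (a / b) = ln lam - ln y with y := lam * b / a, and ln y <= y - 1 *)
have split_ln : ln (a / b) + ln (lam * b / a) = ln lam.
  by rewrite -ln_mult; [congr ln; field | apply: Rdiv_lt_0_compat |]; lra.
have -> : (a * ln lam + a - lam * b) / ln 2 * ln 2 = a * ln lam + a - lam * b by field; lra.
have -> : a * (ln (a / b) / ln 2) * ln 2 = a * ln (a / b) by field; lra.
have ay : a * (lam * b / a) = lam * b by field; lra.
have := Rmult_le_compat_l _ _ _ a0 (ln_le_sub1 y0).
have -> : ln (a / b) = ln lam - ln (lam * b / a) by lra.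
lra.
Qed.

Lemma log_sum_inequality (I : finType) (a b : I -> R) :
  (forall i, 0 <= a i) -> (forall i, 0 <= b i) -> (forall i, 0 < a i -> 0 < b i) ->
  plogq (\big[Rplus/0]_(i : I) a i) (\big[Rplus/0]_(i : I) b i)
  <= \big[Rplus/0]_(i : I) plogq (a i) (b i).
Proof.
move=> a0 b0 ab; set A := \big[Rplus/0]_(i : I) a i; set B := \big[Rplus/0]_(i : I) b i.
have A0 : 0 <= A by apply: Rsum_ge0.
have [A_pos|A_eq0] := Rle_lt_or_eq_dec _ _ A0; last first.
  rewrite -A_eq0 plogq0 big1 => [|i _]; first lra.
  by have := Rsum_ge_term i a0; rewrite -/A -A_eq0 => ai; rewrite (Rle_antisym _ _ ai (a0 i)) plogq0.
have [j aj] : exists j, 0 < a j.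
  apply: NNPP => no_pos; suff : A <= \big[Rplus/0]_(i : I) 0 by rewrite big1_eq; lra.
  apply: Rsum_le => i.
  by apply: Rnot_lt_le => ai; apply: no_pos; exists i.
have B_pos : 0 < B by apply: Rlt_le_trans (ab j aj) (Rsum_ge_term j b0).
have lam0 : 0 < A / B by apply: Rdiv_lt_0_compat.
have l2 : 0 < ln 2 by have := ln_lt_2; lra.
apply: Rle_trans (Rsum_le (fun i => plogq_ge_tangent (a0 i) (b0 i) (ab i) lam0)).
set lam := A / B.
have -> : \big[Rplus/0]_(i : I) ((a i * ln lam + a i - lam * b i) / ln 2) =
    / ln 2 * (ln lam * A + A + (- lam) * B).
  by rewrite /A /B !big_distrr -!big_split big_distrr; apply: eq_bigr => i _ /=; field; lra.
rewrite /plogq /log2 /lam; case: Req_EM_T => [|_] /=; first lra.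
by right; field; lra.
Qed.

Lemma plogq_mixture_le (X Z : finType) (p : X -> R) (mu : Z -> R) (v : Z -> X -> R) (x : X) :
  (forall x, 0 <= p x) -> (forall z, 0 <= mu z) -> (forall z x, 0 <= v z x) ->
  plogq (p x * \big[Rplus/0]_(z : Z) (mu z * v z x))
        (p x * \big[Rplus/0]_(x' : X) (p x' * \big[Rplus/0]_(z : Z) (mu z * v z x')))
  <= \big[Rplus/0]_(z : Z) (mu z * plogq (p x * v z x)
                                       (p x * \big[Rplus/0]_(x' : X) (p x' * v z x'))).
Proof.
move=> p0 mu0 v0.
have -> : p x * \big[Rplus/0]_(z : Z) (mu z * v z x) =
    \big[Rplus/0]_(z : Z) (mu z * (p x * v z x)).
  by rewrite big_distrr; apply: eq_bigr => z _ /=; ring.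
have -> : p x * \big[Rplus/0]_(x' : X) (p x' * \big[Rplus/0]_(z : Z) (mu z * v z x')) =
    \big[Rplus/0]_(z : Z) (mu z * (p x * \big[Rplus/0]_(x' : X) (p x' * v z x'))).
  under eq_bigr do rewrite big_distrr.
  rewrite exchange_big big_distrr; apply: eq_bigr => z _.
  by rewrite !big_distrr; apply: eq_bigr => x' _ /=; ring.
have px_le z : p x * v z x <= \big[Rplus/0]_(x' : X) (p x' * v z x').
  by apply: Rsum_ge_term => x'; apply: Rmult_le_pos.
apply: Rle_trans (log_sum_inequality _ _ _) _.
- by move=> z; apply: Rmult_le_pos => //; apply: Rmult_le_pos.
- move=> z; apply: Rmult_le_pos => //; apply: Rmult_le_pos => //.
  by apply: Rsum_ge0 => x'; apply: Rmult_le_pos.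
- move=> z pos; have px0 := p0 x; have muz0 := mu0 z; have vz0 := v0 z x.
  have mu_px : 0 < mu z * p x by nra.
  have px_v : 0 < p x * v z x by nra.
  by rewrite -Rmult_assoc; apply: Rmult_lt_0_compat => //; have := px_le z; lra.
by right; apply: eq_bigr => z _; rewrite plogqZ.
Qed.

Lemma mutual_info_mixture_le (X Y K Z : finType) (p : X -> R) (mu : Z -> K -> R)
    (V : Z -> K -> X -> Y -> R) :
  (forall x, 0 <= p x) -> (forall z k, 0 <= mu z k) -> (forall z k x y, 0 <= V z k x y) ->
  mutual_info p (fun x (yk : Y * K) => \big[Rplus/0]_(z : Z) (mu z yk.2 * V z yk.2 x yk.1))
  <= \big[Rplus/0]_(z : Z) \big[Rplus/0]_(k : K) (mu z k * mutual_info p (V z k)).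
Proof.
move=> p0 mu0 V0.
pose out z k x y := plogq (p x * V z k x y) (p x * \big[Rplus/0]_(x' : X) (p x' * V z k x' y)).
apply: (Rle_trans _ (\big[Rplus/0]_(x : X) \big[Rplus/0]_(yk : Y * K)
                      \big[Rplus/0]_(z : Z) (mu z yk.2 * out z yk.2 x yk.1))).
  rewrite mutual_infoE; apply: Rsum_le => x; apply: Rsum_le => -[y k] /=.
  by rewrite /out; apply: plogq_mixture_le => // z x'; apply: V0.
right; rewrite exchange_big /=.
under eq_bigr do rewrite exchange_big /=.
rewrite exchange_big /=; apply: eq_bigr => z _.
rewrite -(pair_bigA _ (fun y k => \big[Rplus/0]_(x : X) (mu z k * out z k x y))) /=.
rewrite exchange_big /=; apply: eq_bigr => k _.
rewrite exchange_big /= mutual_infoE big_distrr; apply: eq_bigr => x _ /=.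
by rewrite big_distrr.
Qed.

Lemma mutual_info_reindex (X Y X' Y' : finType) (g : X' -> X) (h : Y' -> Y)
    (p : X -> R) (W : X -> Y -> R) :
  bijective g -> bijective h ->
  mutual_info (fun k => p (g k)) (fun k l => W (g k) (h l)) = mutual_info p W.
Proof.
move=> bg bh; rewrite !mutual_infoE.
rewrite [in RHS](reindex g) /=; last exact: onW_bij.
apply: eq_bigr => k _; rewrite [in RHS](reindex h) /=; last exact: onW_bij.
apply: eq_bigr => l _; by rewrite [in RHS](reindex g) /=; last exact: onW_bij.
Qed.

Lemma classical_rates_encoding n (Om : vec n -> Prop) (X Y : finType) (p : X -> R)
    (om : X -> vec n) (e : Y -> vec n) :
  prob_dist p -> (forall x, Om (om x)) -> measurement Om e ->
  classical_rates Om (mutual_info p (fun x y => dotv (e y) (om x))).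
Proof.
move=> [p0 p1] Hom [He1 He2].
have enumX := onW_bij predT (@enum_val_bij X); have enumY := onW_bij predT (@enum_val_bij Y).
exists #|X|, #|Y|, (fun k => p (enum_val k)), (fun k => om (enum_val k)), (fun l => e (enum_val l)).
split; [split|split; [|split; [split|]]] => [k|||k|i|] //.
- by rewrite -p1 [RHS](reindex (@enum_val X predT)).
- by rewrite -He2 [RHS](reindex (@enum_val Y predT)).
- by rewrite -(mutual_info_reindex p _ (@enum_val_bij X) (@enum_val_bij Y)).
Qed.

Theorem proposition5 (nA nB : nat) (OmA : vec nA -> Prop) (OmB : vec nB -> Prop)
  (OmAB : mat nA nB -> Prop) (X Y1 Y2 Z : finType)
  (phi : mat nA nB) (p : X -> R) (T : X -> lmap nA)
  (q : Z -> R) (e : Z -> Y1 -> vec nA) (f : Z -> Y2 -> vec nB) :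
  state_space OmA -> state_space OmB ->
  closed_mat OmAB -> convex_mat OmAB ->
  (forall psi, min_tensor OmA OmB psi -> OmAB psi) ->
  (forall psi, OmAB psi -> max_tensor OmA OmB psi) ->
  OmAB phi ->
  prob_dist p ->
  (forall x, allowed_local OmA OmAB (T x)) ->
  prob_dist q ->
  (forall z, measurement OmA (e z)) ->
  (forall z, measurement OmB (f z)) ->
  forall chiC : R, is_lub (classical_rates OmA) chiC ->
  mutual_info p (fun (x : X) (y : (Y1 * Y2)%type) =>
                   dotm (decoding q e f y.1 y.2) (applyA (T x) phi)) <= chiC.
Proof.
(* Only Omega_AB <= Omega_A (x)max Omega_B and the action of the T_x on Omega_A are needed. *)
move=> HA _ _ _ _ Hmax Hphi Hp HT Hq He Hf chiC [chi_ub _].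
have [phi1 _] := Hmax _ Hphi.
have [lam [w [lam0 [Omw steer]]]] :=
  max_tensor_steering HA (Hmax _ Hphi) (fun zy : Z * Y2 => (Hf zy.1).1 zy.2).
pose mu z y2 := q z * lam (z, y2).
pose V z y2 x y1 := dotv (e z y1) (applyv (T x) (w (z, y2))).
have channel : (fun x (y : Y1 * Y2) => dotm (decoding q e f y.1 y.2) (applyA (T x) phi)) =
    (fun x y => \big[Rplus/0]_(z : Z) (mu z y.2 * V z y.2 x y.1)).
  apply: functional_extensionality => x; apply: functional_extensionality => -[y1 y2] /=.
  rewrite dotm_decoding; apply: eq_bigr => z _.
  rewrite dotm_tens contractB_applyA (steer (z, y2)) applyv_scaler dotv_scaler /mu /V; ring.
have mu_sum : \big[Rplus/0]_(z : Z) \big[Rplus/0]_(y2 : Y2) mu z y2 = 1.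
  rewrite -Hq.2; apply: eq_bigr => z _; rewrite -big_distrr -[RHS]Rmult_1_r; congr (_ * _).
  rewrite -phi1 -(contractB_measurement phi (Hf z).2); apply: eq_bigr => y2 _.
  by rewrite (steer (z, y2)) /= (state_ord0 HA (Omw _)) Rmult_1_r.
have mu0 z y2 : 0 <= mu z y2 by apply: Rmult_le_pos; [apply: Hq.1 | apply: lam0].
have V0 z y2 x y1 : 0 <= V z y2 x y1.
  by have := (He z).1 y1 _ ((HT x).1 _ (Omw (z, y2))); rewrite /V; lra.
rewrite channel; apply: Rle_trans (mutual_info_mixture_le Hp.1 mu0 V0) _.
rewrite -[chiC]Rmult_1_l -mu_sum big_distrl; apply: Rsum_le => z.
rewrite big_distrl; apply: Rsum_le => y2; apply: Rmult_le_compat_l => //.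
by apply/chi_ub/classical_rates_encoding => // x; apply/(HT x).1/Omw.
Qed.
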